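(* Fix $k, n \in \mathbb{N}$. For $i \in \{0, \ldots, n\}$ let $$P_{k,n,i} = \left\{ x \in \Delta(n+1, k(n+1)) : \sum_{s=1}^{kt} x_{ki+s} \leq t, \quad t = 1, \ldots, n \right\},$$ where indices of coordinates are taken modulo $k(n+1)$ (with representatives in $\{1,\ldots,k(n+1)\}$). Then for $i \neq j$ the interiors of $P_{k,n,i}$ and $P_{k,n,j}$ are disjoint, and $\Delta(n+1, k(n+1)) = \bigcup_{i=0}^{n} P_{k,n,i}$.
   Context: The hypersimplex is $\Delta(k,n) = \{ (x_1,\ldots,x_n) \in [0,1]^n : \sum_{i=1}^n x_i = k\}$. Interiors are taken relative to the affine hull of the hypersimplex. *)

From HB Require Import structures.
From mathcomp Require Import all_boot all_order all_algebra.
From mathcomp Require Export reals.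
Set Implicit Arguments. Unset Strict Implicit. Unset Printing Implicit Defensive.
Import Order.TTheory GRing.Theory Num.Theory.
Local Open Scope ring_scope.

(* Points of R^N are functions 'I_N -> R; coordinate j : 'I_N (0-based)
   corresponds to the paper's coordinate j+1 (1-based). *)

Definition hypersimplex (R : realType) (m N : nat) (x : 'I_N -> R) : Prop :=
  (forall j, 0 <= x j <= 1) /\ \sum_(j < N) x j = m%:R.
Arguments hypersimplex {R} m N x.

Definition coordmod (R : realType) (N : nat) (x : 'I_N -> R) (a : nat) : R :=
  if @insub nat (fun j => (j < N)%N) 'I_N (a %% N)%N is Some j then x j else 0.

(* P_{k,n,i}: the paper's x_{ki+s} (1-based, s = 1..kt) is the 0-based
   coordinate (k i + s - 1) mod k(n+1), i.e. coordmod x (k*i + s') for s' < k t. *)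
Definition Pkni (R : realType) (k n i : nat) (x : 'I_(k * n.+1)%N -> R) : Prop :=
  hypersimplex n.+1 (k * n.+1)%N x /\
  forall t : nat, (1 <= t <= n)%N ->
    \sum_(s < (k * t)%N) coordmod x (k * i + s)%N <= t%:R.
Arguments Pkni {R} k n i x.

Definition affine_hull (R : realType) (N : nat) (S : ('I_N -> R) -> Prop)
  (y : 'I_N -> R) : Prop :=
  exists (m : nat) (p : 'I_m -> 'I_N -> R) (c : 'I_m -> R),
    (forall l, S (p l)) /\ \sum_(l < m) c l = 1 /\
    forall j, y j = \sum_(l < m) c l * p l j.

(* Interior of A relative to the affine hull of S (topology of R^N, here via
   the sup-norm balls, which induce the standard topology). *)
Definition relint (R : realType) (N : nat) (S A : ('I_N -> R) -> Prop)
  (x : 'I_N -> R) : Prop :=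
  A x /\ exists e : R, 0 < e /\
    forall y, affine_hull S y -> (forall j, `|y j - x j| < e) -> A y.

From HB Require Import structures.
From mathcomp Require Import all_boot all_order all_algebra.
From mathcomp Require Import reals.
From mathcomp Require Import zify ring lra.
Set Implicit Arguments. Unset Strict Implicit.
Import Order.TTheory GRing.Theory Num.Theory.
Local Open Scope ring_scope.

(* Cut x into n+1 blocks of k cyclically consecutive coordinates, with block
   sums B_m, and let E(a) = sum_(u < a) (B_u - 1) (this is [excess x a]).
   Since the coordinates sum to n+1, E is (n+1)-periodic, and the window
   constraint of P_{k,n,i} at t reads E(i+t) <= E(i).  So P_{k,n,i} is the part
   of the hypersimplex where i maximises E over a period, and the P_{k,n,i}
   cover it.  In the relative interior of P_{k,n,i} all window constraints are
   strict: if one were tight, moving a little mass from the first coordinate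
   after the window to the first coordinate of the window stays in the affine
   hull of the hypersimplex (this needs k > 1) and violates it.  Hence i is then
   the unique maximiser of E, so the point is in no other P_{k,n,j}. *)

Lemma sum_ord_indicator (R : pzSemiRingType) (m a : nat) :
  \sum_(s < m) ((s == a :> nat)%:R : R) = (a < m)%:R.
Proof.
rewrite (eq_bigr (fun s : 'I_m => if s == a :> nat then 1 else 0)) => [|s _].
  by rewrite -big_mkcond (big_ord1_eq _ (fun=> 1)); case: ltnP.
by case: eqP.
Qed.

Lemma eqn_modDl_small (c s u N : nat) :
  (s < N)%N -> (u < N)%N -> ((c + s) %% N == (c + u) %% N)%N = (s == u).
Proof. by move=> sN uN; rewrite eqn_modDl !modn_small. Qed.

Lemma ord_shift_exists n (i j : 'I_n.+1) :
  i != j -> exists2 t, (1 <= t <= n)%N & ((i + t) %% n.+1)%N = j.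
Proof.
move=> ij; have iN := ltn_ord i; have jN := ltn_ord j.
case: (ltngtP i j) => [lt_ij|lt_ji|/val_inj eq_ij].
- exists (j - i)%N; first lia.
  by rewrite subnKC ?modn_small // ltnW.
- exists (n.+1 + j - i)%N; first lia.
  have -> : (i + (n.+1 + j - i) = n.+1 + j)%N by lia.
  by rewrite modnDl modn_small.
- by rewrite eq_ij eqxx in ij.
Qed.

Section Coordmod.
Variables (R : realType) (N : nat).
Implicit Types x y : 'I_N -> R.

Lemma coordmodDl x a : coordmod x (N + a) = coordmod x a.
Proof. by rewrite /coordmod modnDl. Qed.

Lemma coordmod_small x a (aN : (a < N)%N) : coordmod x a = x (Ordinal aN).
Proof.
rewrite /coordmod (modn_small aN); case: insubP => [j _ ja|]; last by rewrite aN.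
by congr x; apply: val_inj.
Qed.

Lemma coordmod_addf x y (g : nat -> R) : (0 < N)%N ->
  (forall j, y j = x j + g j) -> forall a, coordmod y a = coordmod x a + g (a %% N)%N.
Proof.
move=> N0 yE a; rewrite /coordmod; case: insubP => [j _ ja|]; last by rewrite ltn_pmod.
by rewrite yE ja.
Qed.

Lemma window_sum_move x y (c m : nat) (d : R) : (0 < m < N)%N ->
  (forall j : 'I_N, y j =
     x j + d * ((j == c %% N :> nat)%N%:R - (j == (c + m) %% N :> nat)%N%:R)) ->
  \sum_(s < m) coordmod y (c + s)%N = \sum_(s < m) coordmod x (c + s)%N + d.
Proof.
move=> /andP[m0 mN] yE; have N0 : (0 < N)%N by apply: ltn_trans mN.
pose g a := d * ((a == c %% N)%N%:R - (a == (c + m) %% N)%N%:R).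
under eq_bigr do rewrite (coordmod_addf (g := g) N0 yE).
rewrite big_split /= -mulr_sumr; congr (_ + _).
rewrite (eq_bigr (fun s : 'I_m => (s == 0 :> nat)%:R)) => [|s _].
  by rewrite sum_ord_indicator m0 mulr1.
have sN : (s < N)%N := ltn_trans (ltn_ord s) mN.
by rewrite -{2}[c]addn0 !eqn_modDl_small // (ltn_eqF (ltn_ord s)) subr0.
Qed.

End Coordmod.

Section BlockExcess.
Variables (R : realType) (k p : nat).
Implicit Types x : 'I_(k * p) -> R.

Definition blocksum x (m : nat) : R := \sum_(s < k) coordmod x (k * m + s)%N.

Definition excess x (a : nat) : R := \sum_(u < a) (blocksum x u - 1).

Lemma window_sumE x i t :
  \sum_(s < k * t) coordmod x (k * i + s)%N = excess x (i + t) - excess x i + t%:R.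
Proof.
have -> : \sum_(s < k * t) coordmod x (k * i + s)%N = \sum_(u < t) blocksum x (i + u).
  elim: t => [|t IH]; first by rewrite muln0 !big_ord0.
  rewrite mulnS addnC big_split_ord big_ord_recr /= IH; congr (_ + _).
  by apply: eq_bigr => s _; rewrite mulnDr addnA.
by rewrite /excess big_split_ord /= !sumrB !sumr_const !card_ord; ring.
Qed.

Lemma blocksumDl x u : blocksum x (p + u) = blocksum x u.
Proof. by apply: eq_bigr => s _; rewrite mulnDr -addnA coordmodDl. Qed.

Lemma excess_period x : hypersimplex p (k * p) x -> excess x p = 0.
Proof.
move=> [_ sum_x]; have := window_sumE x 0 p.
rewrite (eq_bigr (fun s => x s)) => [|s _]; last first.
  by rewrite muln0 add0n (coordmod_small x (ltn_ord s)); congr x; apply: val_inj.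
rewrite sum_x add0n /excess big_ord0 subr0 => sum_excess.
by apply: (addIr p%:R); rewrite add0r -sum_excess.
Qed.

Lemma excessDl x a : hypersimplex p (k * p) x -> excess x (p + a) = excess x a.
Proof.
move=> hx; rewrite /excess big_split_ord /= -/(excess x p) excess_period // add0r.
by apply: eq_bigr => u _; rewrite blocksumDl.
Qed.

Lemma excess_modn x a : hypersimplex p (k * p) x -> excess x a = excess x (a %% p).
Proof.
move=> hx; rewrite {1}(divn_eq a p).
elim: (a %/ p)%N => [|q IH]; first by rewrite mul0n.
by rewrite mulSn -addnA excessDl.
Qed.
End BlockExcess.

Lemma Pkni_excess_max (R : realType) k n (i : 'I_n.+1) (x : 'I_(k * n.+1) -> R) :
  Pkni k n i x <->
  hypersimplex n.+1 (k * n.+1) x /\ forall j : 'I_n.+1, excess x j <= excess x i.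
Proof.
split=> -[hx hmax]; split=> //.
- move=> j; have [->|ij] := eqVneq i j; first exact: lexx.
  have [t tn <-] := ord_shift_exists ij.
  by rewrite -excess_modn //; have := hmax t tn; rewrite window_sumE gerDr subr_le0.
- move=> t tn; rewrite window_sumE gerDr subr_le0 excess_modn //.
  exact: (hmax (Ordinal (ltn_pmod _ (ltn0Sn n)))).
Qed.

Lemma hypersimplex_cover (R : realType) k n (x : 'I_(k * n.+1) -> R) :
  hypersimplex n.+1 (k * n.+1) x -> exists i : 'I_n.+1, Pkni k n i x.
Proof.
move=> hx; case: (@arg_maxP _ _ _ ord0 xpredT (fun i : 'I_n.+1 => excess x i) isT).
by move=> i _ imax; exists i; apply/Pkni_excess_max; split=> // j; apply: imax.
Qed.

Lemma affine_hull_translate (R : realType) N (S : ('I_N -> R) -> Prop)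
    (x z1 z2 y : 'I_N -> R) (c : R) :
  S x -> S z1 -> S z2 -> (forall j, y j = x j + c * (z1 j - z2 j)) ->
  affine_hull S y.
Proof.
move=> Sx Sz1 Sz2 yE.
exists 3%N, (fun l : 'I_3 => nth x [:: x; z1; z2] l),
  (fun l : 'I_3 => nth 0 [:: 1; c; - c] l).
split; first by case=> -[|[|[|]]].
by split=> [|j]; rewrite !big_ord_recl big_ord0 /= ?yE; ring.
Qed.

Lemma hypersimplex_uniform (R : realType) k p :
  (0 < k)%N -> hypersimplex p (k * p) (fun _ => (k%:R : R)^-1).
Proof.
move=> k0; have kpos : (0 : R) < k%:R by rewrite ltr0n.
split=> [j|]; first by rewrite invr_ge0 ltW //= invf_le1 // ler1n.
rewrite sumr_const card_ord -(mulr_natr _ (k * p)) natrM mulrA.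
by rewrite mulVf ?mul1r // lt0r_neq0.
Qed.

Lemma hypersimplex_move (R : realType) m N (z : 'I_N -> R) (a b : 'I_N) (d : R) :
  hypersimplex m N z -> a != b -> 0 <= d -> z a + d <= 1 -> d <= z b ->
  hypersimplex m N (fun j => z j + d * ((j == a)%:R - (j == b)%:R)).
Proof.
move=> [z01 sum_z] ab d0 zad dzb; split=> [j|].
  have [->|ja] := eqVneq j a.
    have /andP[za0 za1] := z01 a.
    by rewrite (negbTE ab) subr0 mulr1; apply/andP; split; lra.
  have [->|jb] := eqVneq j b.
    have /andP[zb0 zb1] := z01 b.
    by rewrite sub0r mulrN1; apply/andP; split; lra.
  by rewrite subrr mulr0 addr0 z01.
rewrite big_split /= -mulr_sumr sumrB !sum_ord_indicator !ltn_ord.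
by rewrite subrr mulr0 addr0 sum_z.
Qed.

Lemma relint_Pkni_window_lt (R : realType) k n (i : 'I_n.+1)
    (x : 'I_(k * n.+1) -> R) t :
  (1 < k)%N -> relint (hypersimplex n.+1 (k * n.+1)) (Pkni k n i) x ->
  (1 <= t <= n)%N -> \sum_(s < k * t) coordmod x (k * i + s)%N < t%:R.
Proof.
move=> k2 [[hx hP] [e [e0 he]]] tn.
rewrite lt_neqAle hP // andbT; apply/negP => /eqP tight.
set N := (k * n.+1)%N.
have ktN : (0 < k * t < N)%N by rewrite /N; nia.
have N0 : (0 < N)%N by case/andP: ktN => _; apply: leq_ltn_trans.
pose a := Ordinal (ltn_pmod (k * i) N0).
pose b := Ordinal (ltn_pmod (k * i + k * t) N0).
have ab : a != b.
  rewrite -val_eqE /= -{1}[(k * i)%N]addn0 eqn_modDl_small //; last by case/andP: ktN.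
  by rewrite eq_sym -lt0n; case/andP: ktN.
pose d := e / 2; have d0 : 0 < d by rewrite divr_gt0.
pose y j := x j + d * ((j == a)%:R - (j == b)%:R).
have Py : Pkni k n i y.
  apply: he => [|j]; last first.
    rewrite /y addrC addKr normrM gtr0_norm //.
    have : `|(j == a)%:R - (j == b)%:R : R| <= 1.
      by case: (j == a); case: (j == b);
        rewrite /= ?subrr ?subr0 ?sub0r ?normrN ?normr1 ?normr0.
    move=> delta1; apply: le_lt_trans (ler_wpM2l (ltW d0) delta1) _; rewrite mulr1 /d; lra.
  have kpos : (0 : R) < k%:R by rewrite ltr0n ltnW.
  have hu := hypersimplex_uniform R n.+1 (ltnW k2); set u := fun _ => _ in hu.
  (* y - x is a multiple of v - u, where u is the barycentre of the
     hypersimplex and v = u + (e_a - e_b) / k. *)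
  have hv : hypersimplex n.+1 (k * n.+1)
      (fun j => u j + k%:R^-1 * ((j == a)%:R - (j == b)%:R)).
    apply: hypersimplex_move => //; first by rewrite invr_ge0 ler0n.
    by rewrite /u -mulr2n -(mulr_natl _ 2) ler_pdivrMr // mul1r ler_nat.
  apply: (affine_hull_translate (c := d * k%:R) hx hv hu) => j.
  by rewrite /y /u addrAC subrr add0r mulrA mulfK // lt0r_neq0.
have yE : forall j : 'I_N, y j = x j +
    d * ((j == (k * i) %% N :> nat)%N%:R - (j == (k * i + k * t) %% N :> nat)%N%:R) by [].
by have := proj2 Py t tn; rewrite (window_sum_move ktN yE) tight gerDl lt_geF.
Qed.

Lemma relint_Pkni_excess_lt (R : realType) k n (i j : 'I_n.+1)
    (x : 'I_(k * n.+1) -> R) :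
  (1 < k)%N -> relint (hypersimplex n.+1 (k * n.+1)) (Pkni k n i) x ->
  i != j -> excess x j < excess x i.
Proof.
move=> k2 xi ij; have [t tn <-] := ord_shift_exists ij.
have := relint_Pkni_window_lt k2 xi tn.
by rewrite window_sumE gtrDr subr_lt0 -excess_modn //; case: xi => -[].
Qed.

Theorem mainTheorem2 (R : realType) (k n : nat) (hk : (1 < k)%N) :
  (forall i j : 'I_n.+1, i != j -> forall x : 'I_(k * n.+1)%N -> R,
      ~ (relint (hypersimplex n.+1 (k * n.+1)%N) (Pkni k n i) x /\
         relint (hypersimplex n.+1 (k * n.+1)%N) (Pkni k n j) x)) /\
  (forall x : 'I_(k * n.+1)%N -> R,
      hypersimplex n.+1 (k * n.+1)%N x <-> exists i : 'I_n.+1, Pkni k n i x).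
Proof.
split=> [i j ij x [xi [/Pkni_excess_max [_ jmax] _]]|x].
  by move: (relint_Pkni_excess_lt hk xi ij) => /lt_geF; rewrite jmax.
by split=> [|[i []]]; first exact: hypersimplex_cover.
Qed.
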